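(* Let $d\ge1$, $0<s_0<s_1$, $0<\alpha_0<\alpha_1$, $W=[s_0,s_1]\times[\alpha_0,\alpha_1]$ with interior $W^\circ$. Let $\varphi\in C^2(W^\circ,\mathbb{R})$ be non-negative and convex, with $\varphi(s,\alpha)\to\infty$ whenever $s\to s_0$, $s\to s_1$, $\alpha\to\alpha_0$ or $\alpha\to\alpha_1$, and strongly convex: there is $\theta>0$ with $\nabla^2\varphi(x)-\theta I$ positive semidefinite for all $x\in W^\circ$. For $g\in L^2_0(\mathbb{T}^d;\mathbb{C})$, $u_d\in L^2(\mathbb{T}^d;\mathbb{C})$ define $\mathcal{S}(s,\alpha)=\big(\frac{\alpha}{\alpha+|k|^{2s}}\hat g_k\big)_{k\in\mathbb{Z}^d}$ and $j(s,\alpha)=\frac{1}{2(2\pi)^d}\|\mathcal{S}(s,\alpha)-\widehat{\mathbf U}_d\|_{\ell^2}^2+\varphi(s,\alpha)$, where $\widehat{\mathbf U}_d=(\hat u_{d,k})_k$. Then, if $\|g\|_{L^2}$ and $\|u_d\|_{L^2}$ are sufficiently small, there exists a constant $\kappa>0$ such that $\nabla^2 j(s,\alpha)-\kappa I$ is positive semidefinite for all $(s,\alpha)\in W^\circ$.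
   Context: $\mathbb{T}^d=\mathbb{R}^d/(2\pi\mathbb{Z})^d$; $\hat u_k=\int_{\mathbb{T}^d}u\,e^{-ik\cdot x}dx$; convention $|0|^{2s}=0$; $L^2_0$ is the zero-mean subspace of $L^2$. ''Sufficiently small'' means: there is a threshold (depending on $W$, $d$ and $\theta$) such that the conclusion holds whenever both norms lie below it. *)

From Stdlib Require Import Reals Lra List ZArith.
From Coquelicot Require Import Coquelicot.
Import ListNotations.
Open Scope R_scope.

(* ---------- The lattice Z^d, represented by lists of integers of length d ---------- *)

Definition zrange (N : nat) : list Z :=
  map (fun i => (Z.of_nat i - Z.of_nat N)%Z) (seq 0 (2 * N + 1)).

Fixpoint boxes (d N : nat) : list (list Z) :=
  match d with
  | O => [nil]
  | S d' => flat_map (fun z => map (cons z) (boxes d' N)) (zrange N)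
  end.

Definition boxsum (d N : nat) (f : list Z -> R) : R :=
  fold_right Rplus 0 (map f (boxes d N)).

Definition l2sq (d : nat) (c : list Z -> C) : R :=
  real (Lim_seq (fun N => boxsum d N (fun k => (Cmod (c k)) ^ 2))).

Definition l2summable (d : nat) (c : list Z -> C) : Prop :=
  exists M : R, forall N : nat, boxsum d N (fun k => (Cmod (c k)) ^ 2) <= M.

(* L^2(T^d) norm of the function whose Fourier coefficients
   (hat u_k = \int u e^{-ik.x} dx) are c:  ||u||^2 = (2 pi)^{-d} sum |hat u_k|^2 *)
Definition L2norm (d : nat) (c : list Z -> C) : R :=
  sqrt (l2sq d c / (2 * PI) ^ d).

Definition normk2 (k : list Z) : R :=
  fold_right (fun z acc => (IZR z) ^ 2 + acc) 0 k.

(* |k|^{2s} = (|k|^2)^s, with the convention |0|^{2s} = 0 *)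
Definition kpow (k : list Z) (s : R) : R :=
  if Req_EM_T (normk2 k) 0 then 0 else Rpower (normk2 k) s.

Definition Ssol (g : list Z -> C) (s a : R) (k : list Z) : C :=
  Cmult (RtoC (a / (a + kpow k s))) (g k).

Definition jfun (d : nat) (g ud : list Z -> C) (phi : R -> R -> R) (s a : R) : R :=
  / (2 * (2 * PI) ^ d) * l2sq d (fun k => Cminus (Ssol g s a k) (ud k)) + phi s a.

Definition inW (s0 s1 a0 a1 s a : R) : Prop := s0 < s < s1 /\ a0 < a < a1.

Definition d1 (f : R -> R -> R) (s a : R) : R := Derive (fun x => f x a) s.
Definition d2 (f : R -> R -> R) (s a : R) : R := Derive (fun y => f s y) a.

Definition twice_diff_on (s0 s1 a0 a1 : R) (f : R -> R -> R) : Prop :=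
  forall s a, inW s0 s1 a0 a1 s a ->
    ex_derive (fun x => f x a) s /\ ex_derive (fun y => f s y) a /\
    ex_derive (fun x => d1 f x a) s /\ ex_derive (fun y => d1 f s y) a /\
    ex_derive (fun x => d2 f x a) s /\ ex_derive (fun y => d2 f s y) a.

Definition cont2 (h : R -> R -> R) (s a : R) : Prop :=
  continuous (fun p : R * R => h (fst p) (snd p)) (s, a).

Definition C2_on (s0 s1 a0 a1 : R) (f : R -> R -> R) : Prop :=
  twice_diff_on s0 s1 a0 a1 f /\
  forall s a, inW s0 s1 a0 a1 s a ->
    cont2 f s a /\ cont2 (d1 f) s a /\ cont2 (d2 f) s a /\
    cont2 (d1 (d1 f)) s a /\ cont2 (d2 (d1 f)) s a /\
    cont2 (d1 (d2 f)) s a /\ cont2 (d2 (d2 f)) s a.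

Definition hess_form (f : R -> R -> R) (s a v1 v2 : R) : R :=
  v1 * (d1 (d1 f) s a * v1 + d2 (d1 f) s a * v2)
  + v2 * (d1 (d2 f) s a * v1 + d2 (d2 f) s a * v2).

Definition hess_psd_shift (f : R -> R -> R) (c s a : R) : Prop :=
  forall v1 v2 : R, 0 <= hess_form f s a v1 v2 - c * (v1 ^ 2 + v2 ^ 2).

Definition convex_on (s0 s1 a0 a1 : R) (f : R -> R -> R) : Prop :=
  forall s a s' a' t, inW s0 s1 a0 a1 s a -> inW s0 s1 a0 a1 s' a' -> 0 <= t <= 1 ->
    f (t * s + (1 - t) * s') (t * a + (1 - t) * a')
      <= t * f s a + (1 - t) * f s' a'.

Definition blows_up_at_boundary (s0 s1 a0 a1 : R) (f : R -> R -> R) : Prop :=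
  forall M : R, exists eps : R, 0 < eps /\
    forall s a, inW s0 s1 a0 a1 s a ->
      (s < s0 + eps \/ s1 - eps < s \/ a < a0 + eps \/ a1 - eps < a) -> M < f s a.

(* Write [r_k = a / (a + |k|^{2s}) = tau (s ln|k|^2 - ln a)] with [tau t = 1 / (1 + e^t)].  The
   k-th term of the data fit is [|g_k|^2 r_k^2 - 2 Re (g_k conj u_k) r_k + |u_k|^2], and every
   partial derivative of [r_k] or [r_k^2] in [(s, a)] has the form
   [(ln|k|^2)^i a^{-j} tau p(tau)] with [p] a polynomial.  As [tau t <= e^{-t}], these are
   bounded on [W] uniformly in [k], so the series can be differentiated termwise twice and the
   Hessian of the data-fit part is bounded by a constant depending only on [W] times
   [||g||^2 + ||u_d||^2].  For small norms this is at most [theta / 2], and the [theta]-strong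
   convexity of [phi] leaves [Hess j - (theta / 2) I] positive semidefinite. *)

From Stdlib Require Import Reals Lra Lia List ZArith.
From Coquelicot Require Import Coquelicot.
Import ListNotations.
Open Scope R_scope.

(** * Sums over the lattice *)

Definition lsum {A} (l : list A) (F : A -> R) : R := fold_right Rplus 0 (map F l).

Lemma lsum_app {A} (l1 l2 : list A) F : lsum (l1 ++ l2) F = lsum l1 F + lsum l2 F.
Proof. unfold lsum; induction l1 as [|x l1 IH]; cbn; [lra|]. rewrite IH; lra. Qed.

Lemma lsum_flat_map {A B} (l : list A) (G : A -> list B) F :
  lsum (flat_map G l) F = lsum l (fun z => lsum (G z) F).
Proof. induction l as [|x l IH]; [easy|]. cbn [flat_map]. now rewrite lsum_app, IH. Qed.

Lemma lsum_plus {A} (l : list A) F G : lsum l (fun x => F x + G x) = lsum l F + lsum l G.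
Proof. unfold lsum; induction l as [|x l IH]; cbn; [lra|]. rewrite IH; lra. Qed.

Lemma lsum_minus {A} (l : list A) F G : lsum l (fun x => F x - G x) = lsum l F - lsum l G.
Proof. unfold lsum; induction l as [|x l IH]; cbn; [lra|]. rewrite IH; lra. Qed.

Lemma lsum_scal {A} (l : list A) c F : lsum l (fun x => c * F x) = c * lsum l F.
Proof. unfold lsum; induction l as [|x l IH]; cbn; [lra|]. rewrite IH; lra. Qed.

Lemma lsum_le {A} (l : list A) F G : (forall x, F x <= G x) -> lsum l F <= lsum l G.
Proof. intros H; unfold lsum; induction l as [|x l IH]; cbn; [lra|]. specialize (H x); lra. Qed.

Lemma lsum_abs {A} (l : list A) F : Rabs (lsum l F) <= lsum l (fun x => Rabs (F x)).
Proof.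
  unfold lsum; induction l as [|x l IH]; cbn; [rewrite Rabs_R0; lra|].
  eapply Rle_trans; [apply Rabs_triang|]. lra.
Qed.

Lemma boxsum_plus d N F G : boxsum d N (fun k => F k + G k) = boxsum d N F + boxsum d N G.
Proof. apply lsum_plus. Qed.

Lemma boxsum_minus d N F G : boxsum d N (fun k => F k - G k) = boxsum d N F - boxsum d N G.
Proof. apply lsum_minus. Qed.

Lemma boxsum_scal d N c F : boxsum d N (fun k => c * F k) = c * boxsum d N F.
Proof. apply lsum_scal. Qed.

Lemma boxsum_le d N F G : (forall k, F k <= G k) -> boxsum d N F <= boxsum d N G.
Proof. apply lsum_le. Qed.

Lemma boxsum_abs d N F : Rabs (boxsum d N F) <= boxsum d N (fun k => Rabs (F k)).
Proof. apply lsum_abs. Qed.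

Lemma boxsum_nonneg d N F : (forall k, 0 <= F k) -> 0 <= boxsum d N F.
Proof.
  intros H. replace 0 with (boxsum d N (fun _ => 0 * 0)) by (rewrite boxsum_scal; lra).
  apply boxsum_le. intros k; rewrite Rmult_0_l; apply H.
Qed.

Lemma boxsum_S d N f :
  boxsum (S d) N f = lsum (zrange N) (fun z => boxsum d N (fun k => f (z :: k))).
Proof.
  change (boxsum (S d) N f)
    with (lsum (flat_map (fun z => map (cons z) (boxes d N)) (zrange N)) f).
  rewrite lsum_flat_map. unfold lsum. f_equal. apply map_ext. intros z. now rewrite map_map.
Qed.

Lemma zrange_S N : zrange (S N) = ((- Z.of_nat (S N))%Z :: zrange N) ++ [Z.of_nat (S N)].
Proof.
  unfold zrange. replace (2 * S N + 1)%nat with (S (S (2 * N + 1))) by lia.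
  rewrite seq_S, map_app. cbn [seq map]. f_equal.
  - f_equal. rewrite <- seq_shift, map_map. apply map_ext. intros i. lia.
  - f_equal. lia.
Qed.

Lemma boxsum_mono d N F : (forall k, 0 <= F k) -> boxsum d N F <= boxsum d (S N) F.
Proof.
  revert N F; induction d as [|d IH]; intros N F HF; [cbn; lra|].
  rewrite !boxsum_S, zrange_S, lsum_app. unfold lsum at 2 3. cbn [map fold_right].
  assert (lsum (zrange N) (fun z => boxsum d N (fun k => F (z :: k))) <=
          lsum (zrange N) (fun z => boxsum d (S N) (fun k => F (z :: k))))
    by (apply lsum_le; intros z; apply IH; auto).
  assert (0 <= boxsum d (S N) (fun k => F ((- Z.of_nat (S N))%Z :: k)))
    by (apply boxsum_nonneg; auto).
  assert (0 <= boxsum d (S N) (fun k => F (Z.of_nat (S N) :: k))) by (apply boxsum_nonneg; auto).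
  unfold lsum in *. lra.
Qed.

Definition ssum (d : nat) (F : list Z -> R) : R := real (Lim_seq (fun N => boxsum d N F)).

Lemma ssum_eq_of_lim d F (l : R) : is_lim_seq (fun N => boxsum d N F) l -> ssum d F = l.
Proof. intros H. unfold ssum. now rewrite (is_lim_seq_unique _ _ H). Qed.

Lemma is_lim_ssum_nonneg d F M : (forall k, 0 <= F k) -> (forall N, boxsum d N F <= M) ->
  is_lim_seq (fun N => boxsum d N F) (ssum d F).
Proof.
  intros HF HM.
  destruct (ex_finite_lim_seq_incr _ M (fun N => boxsum_mono d N F HF) HM) as [l Hl].
  now rewrite (ssum_eq_of_lim _ _ _ Hl).
Qed.

Lemma ssum_nonneg d F M : (forall k, 0 <= F k) -> (forall N, boxsum d N F <= M) -> 0 <= ssum d F.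
Proof.
  intros HF HM.
  apply (is_lim_seq_le (fun _ => 0) _ 0 _ (fun N => boxsum_nonneg d N F HF)
           (is_lim_seq_const 0) (is_lim_ssum_nonneg d F M HF HM)).
Qed.

Lemma Rabs_lim_le (u v : nat -> R) (lu lv : R) : (forall n, Rabs (u n) <= v n) ->
  is_lim_seq u lu -> is_lim_seq v lv -> Rabs lu <= lv.
Proof.
  intros H Hu Hv. apply Rabs_le. split.
  - assert (Hle : Rbar_le (- lv) lu).
    { apply (is_lim_seq_le (fun n => - v n) u); [|apply (proj1 (is_lim_seq_opp v lv) Hv)|exact Hu].
      intros n. specialize (H n). apply Rabs_le_between in H. lra. }
    cbn in Hle. lra.
  - apply (is_lim_seq_le u v lu lv); auto.
    intros n. specialize (H n). apply Rabs_le_between in H. lra.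
Qed.

(** * Termwise differentiation *)

Lemma is_derive_eq (f : R -> R) x l l' : is_derive f x l -> l = l' -> is_derive f x l'.
Proof. now intros H <-. Qed.

Lemma is_derive_lincomb (f1 f2 : R -> R) c1 c2 c0 x l1 l2 :
  is_derive f1 x l1 -> is_derive f2 x l2 ->
  is_derive (fun y => c1 * f1 y - c2 * f2 y + c0) x (c1 * l1 - c2 * l2).
Proof.
  intros H1 H2. eapply is_derive_eq.
  - apply (is_derive_plus (fun y => c1 * f1 y - c2 * f2 y) (fun _ => c0)).
    + apply (is_derive_minus (fun y => c1 * f1 y) (fun y => c2 * f2 y));
        apply is_derive_scal; eassumption.
    + apply is_derive_const.
  - unfold plus, zero; cbn. ring.
Qed.

Lemma Rabs_sub_le_of_derive_bound (f df : R -> R) x y K :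
  (forall z, Rmin x y <= z <= Rmax x y -> is_derive f z (df z)) ->
  (forall z, Rmin x y <= z <= Rmax x y -> Rabs (df z) <= K) ->
  Rabs (f y - f x) <= K * Rabs (y - x).
Proof.
  intros Hf Hdf.
  destruct (MVT_gen f x y df) as [c [Hc ->]].
  - intros z Hz. apply Hf. lra.
  - intros z Hz. apply continuity_pt_filterlim, (ex_derive_continuous f z).
    exists (df z). now apply Hf.
  - rewrite Rabs_mult. apply Rmult_le_compat_r; [apply Rabs_pos|]. now apply Hdf.
Qed.

Lemma between_in_interval lo hi x y z :
  lo < x < hi -> lo < y < hi -> Rmin x y <= z <= Rmax x y -> lo < z < hi.
Proof. unfold Rmin, Rmax. destruct (Rle_dec x y); lra. Qed.

Lemma taylor_remainder_le (f f1 f2 : R -> R) lo hi x y K :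
  lo < x < hi -> lo < y < hi ->
  (forall z, lo < z < hi -> is_derive f z (f1 z)) ->
  (forall z, lo < z < hi -> is_derive f1 z (f2 z)) ->
  (forall z, lo < z < hi -> Rabs (f2 z) <= K) ->
  Rabs (f y - f x - (y - x) * f1 x) <= K * (y - x) ^ 2.
Proof.
  intros Hx Hy Hf Hf1 Hf2.
  assert (HK : 0 <= K) by (eapply Rle_trans; [apply Rabs_pos|apply (Hf2 x Hx)]).
  replace (f y - f x - (y - x) * f1 x)
    with ((fun z => f z - z * f1 x) y - (fun z => f z - z * f1 x) x) by ring.
  rewrite <- pow2_abs.
  replace (K * Rabs (y - x) ^ 2) with (K * Rabs (y - x) * Rabs (y - x)) by ring.
  apply (Rabs_sub_le_of_derive_bound (fun z => f z - z * f1 x) (fun z => f1 z - f1 x)).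
  - intros z Hz. apply (is_derive_minus f (fun z => z * f1 x)).
    + apply Hf. now apply (between_in_interval lo hi x y).
    + auto_derive; auto. ring.
  - intros z Hz. eapply Rle_trans.
    + apply Rabs_sub_le_of_derive_bound with (df := f2).
      * intros w Hw. apply Hf1. apply (between_in_interval lo hi x z); auto.
        now apply (between_in_interval lo hi x y).
      * intros w Hw. apply Hf2. apply (between_in_interval lo hi x z); auto.
        now apply (between_in_interval lo hi x y).
    + apply Rmult_le_compat_l; auto.
      revert Hz. unfold Rmin, Rmax. destruct (Rle_dec x y); intros Hz.
      * rewrite !Rabs_right; lra.
      * rewrite !Rabs_left1; lra.
Qed.

Lemma is_derive_of_remainder_le (A : R -> R) lo hi x D C :
  lo < x < hi -> 0 <= C ->
  (forall y, lo < y < hi -> Rabs (A y - A x - (y - x) * D) <= C * (y - x) ^ 2) ->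
  is_derive A x D.
Proof.
  intros Hx HC H. apply is_derive_Reals. intros eps Heps.
  assert (Hdelta : 0 < Rmin (Rmin (x - lo) (hi - x)) (eps / (C + 1))).
  { repeat apply Rmin_pos; try lra. apply Rdiv_lt_0_compat; lra. }
  exists (mkposreal _ Hdelta). intros h Hh0 Hh. cbn in Hh.
  assert (Hm1 := Rmin_l (Rmin (x - lo) (hi - x)) (eps / (C + 1))).
  assert (Hm2 := Rmin_r (Rmin (x - lo) (hi - x)) (eps / (C + 1))).
  assert (Hm3 := Rmin_l (x - lo) (hi - x)). assert (Hm4 := Rmin_r (x - lo) (hi - x)).
  assert (Hhabs : 0 < Rabs h) by now apply Rabs_pos_lt.
  specialize (H (x + h)). replace (x + h - x) with h in H by ring.
  replace ((A (x + h) - A x) / h - D) with ((A (x + h) - A x - h * D) / h) by (field; auto).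
  unfold Rdiv. rewrite Rabs_mult, Rabs_inv.
  apply Rmult_lt_reg_r with (Rabs h); auto.
  rewrite Rmult_assoc, Rinv_l, Rmult_1_r by lra.
  assert (Hlo : Rabs h < x - lo) by lra. assert (Hhi : Rabs h < hi - x) by lra.
  apply Rabs_lt_between in Hlo, Hhi.
  eapply Rle_lt_trans; [apply H; lra|].
  rewrite <- pow2_abs.
  assert ((C + 1) * Rabs h < eps).
  { apply Rlt_le_trans with ((C + 1) * (eps / (C + 1))).
    - apply Rmult_lt_compat_l; lra.
    - right. field. lra. }
  nra.
Qed.

Section Dominated.

Variables (d : nat) (W : list Z -> R) (M : R).
Hypothesis W_nonneg : forall k, 0 <= W k.
Hypothesis W_bounded : forall N, boxsum d N W <= M.

(* [F] is the difference of the two nonnegative bounded families [F + B W] and [B W]. *)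
Lemma is_lim_ssum_dominated B F : 0 <= B -> (forall k, Rabs (F k) <= B * W k) ->
  is_lim_seq (fun N => boxsum d N F) (ssum d F).
Proof.
  intros HB HF.
  assert (HFW : forall k, 0 <= F k + B * W k /\ 0 <= B * W k).
  { intros k. specialize (HF k). specialize (W_nonneg k). apply Rabs_le_between in HF. nra. }
  assert (Hsum : forall N, boxsum d N (fun k => F k + B * W k) <= 2 * B * M
                        /\ boxsum d N (fun k => B * W k) <= B * M).
  { intros N. specialize (W_bounded N). split.
    - apply Rle_trans with (boxsum d N (fun k => (2 * B) * W k)).
      + apply boxsum_le. intros k. specialize (HF k). apply Rabs_le_between in HF. lra.
      + rewrite boxsum_scal. nra.
    - rewrite boxsum_scal. nra. }
  pose proof (is_lim_seq_minus' _ _ _ _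
    (is_lim_ssum_nonneg _ _ _ (fun k => proj1 (HFW k)) (fun N => proj1 (Hsum N)))
    (is_lim_ssum_nonneg _ _ _ (fun k => proj2 (HFW k)) (fun N => proj2 (Hsum N)))) as L.
  assert (Hl : is_lim_seq (fun N => boxsum d N F)
     (ssum d (fun k => F k + B * W k) - ssum d (fun k => B * W k))).
  { eapply is_lim_seq_ext; [|exact L]. intros N. cbn. rewrite boxsum_plus. lra. }
  now rewrite (ssum_eq_of_lim _ _ _ Hl).
Qed.

Lemma Rabs_ssum_le B F : 0 <= B -> (forall k, Rabs (F k) <= B * W k) ->
  Rabs (ssum d F) <= B * ssum d W.
Proof.
  intros HB HF.
  apply (Rabs_lim_le (fun N => boxsum d N F) (fun N => B * boxsum d N W)).
  - intros N. rewrite <- boxsum_scal. eapply Rle_trans; [apply boxsum_abs|]. now apply boxsum_le.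
  - now apply is_lim_ssum_dominated with B.
  - apply (is_lim_seq_scal_l _ B _ (is_lim_ssum_nonneg _ _ _ W_nonneg W_bounded)).
Qed.

(* The second-order Taylor remainders are dominated by [B W k (y - x)^2]. *)
Lemma is_derive_ssum lo hi B (f f1 f2 : list Z -> R -> R) x :
  0 <= B -> lo < x < hi ->
  (forall k y, lo < y < hi -> is_derive (f k) y (f1 k y)) ->
  (forall k y, lo < y < hi -> is_derive (f1 k) y (f2 k y)) ->
  (forall k y, lo < y < hi ->
     Rabs (f k y) <= B * W k /\ Rabs (f1 k y) <= B * W k /\ Rabs (f2 k y) <= B * W k) ->
  is_derive (fun y => ssum d (fun k => f k y)) x (ssum d (fun k => f1 k x)).
Proof.
  intros HB Hx Hf Hf1 Hbd.
  apply (is_derive_of_remainder_le _ lo hi x _ (B * ssum d W)); auto.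
  { apply Rmult_le_pos; auto. now apply ssum_nonneg with M. }
  intros y Hy.
  assert (Lf : forall z, lo < z < hi ->
            is_lim_seq (fun N => boxsum d N (fun k => f k z)) (ssum d (fun k => f k z))).
  { intros z Hz. apply is_lim_ssum_dominated with B; auto. intros k. apply Hbd, Hz. }
  assert (Lf1 : is_lim_seq (fun N => boxsum d N (fun k => f1 k x)) (ssum d (fun k => f1 k x))).
  { apply is_lim_ssum_dominated with B; auto. intros k. apply Hbd, Hx. }
  apply (Rabs_lim_le (fun N => boxsum d N (fun k => f k y - f k x - (y - x) * f1 k x))
                     (fun N => B * (y - x) ^ 2 * boxsum d N W)).
  - intros N. rewrite <- boxsum_scal. eapply Rle_trans; [apply boxsum_abs|].
    apply boxsum_le. intros k. replace (B * (y - x) ^ 2 * W k) with (B * W k * (y - x) ^ 2) by ring.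
    apply (taylor_remainder_le (f k) (f1 k) (f2 k) lo hi); auto. intros z Hz. apply Hbd, Hz.
  - eapply is_lim_seq_ext;
      [|exact (is_lim_seq_minus' _ _ _ _ (is_lim_seq_minus' _ _ _ _ (Lf y Hy) (Lf x Hx))
                 (is_lim_seq_scal_l _ (y - x) _ Lf1))].
    intros N. cbn. now rewrite !boxsum_minus, boxsum_scal.
  - replace (B * ssum d W * (y - x) ^ 2) with (B * (y - x) ^ 2 * ssum d W) by ring.
    apply (is_lim_seq_scal_l _ (B * (y - x) ^ 2) _ (is_lim_ssum_nonneg _ _ _ W_nonneg W_bounded)).
Qed.

End Dominated.

(** * The Fourier multipliers and their derivatives *)

Inductive dir := Ds | Da.

Definition along (e : dir) (f : R -> R -> R) (s a : R) : R -> R :=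
  match e with Ds => fun x => f x a | Da => fun y => f s y end.

Definition coord (e : dir) (s a : R) : R := match e with Ds => s | Da => a end.

Fixpoint peval (p : list R) (x : R) : R :=
  match p with
  | [] => 0
  | c :: p' => c + x * peval p' x
  end.

Fixpoint padd (p q : list R) : list R :=
  match p, q with
  | [], _ => q
  | _, [] => p
  | c :: p', e :: q' => (c + e) :: padd p' q'
  end.

Definition pscale (c : R) (p : list R) : list R := map (Rmult c) p.

Fixpoint pderiv (p : list R) : list R :=
  match p with
  | [] => []
  | _ :: p' => padd p' (0 :: pderiv p')
  end.

Definition pnorm (p : list R) : R := fold_right (fun c acc => Rabs c + acc) 0 p.

Lemma peval_padd p q x : peval (padd p q) x = peval p x + peval q x.
Proof.
  revert q; induction p as [|c p IH]; intros [|e q]; cbn; try lra.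
  rewrite IH. ring.
Qed.

Lemma peval_pscale c p x : peval (pscale c p) x = c * peval p x.
Proof. induction p as [|e p IH]; cbn; [ring|]. unfold pscale in IH; rewrite IH. ring. Qed.

Lemma is_derive_peval p x : is_derive (peval p) x (peval (pderiv p) x).
Proof.
  induction p as [|c p IH]; cbn.
  - apply (is_derive_const 0).
  - eapply is_derive_eq.
    + apply (is_derive_plus (fun _ => c) (fun y => y * peval p y)); [apply is_derive_const|].
      apply (is_derive_mult (fun y => y) (peval p)); [apply is_derive_id|exact IH|].
      intros; apply Rmult_comm.
    + rewrite peval_padd. cbn. unfold plus, mult, one, zero; cbn. ring.
Qed.

Lemma pnorm_nonneg p : 0 <= pnorm p.
Proof. unfold pnorm; induction p as [|c p IH]; cbn; [lra|]. pose proof (Rabs_pos c). lra. Qed.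

Lemma Rabs_peval_le p x : 0 <= x <= 1 -> Rabs (peval p x) <= pnorm p.
Proof.
  intros Hx. unfold pnorm; induction p as [|c p IH]; cbn; [rewrite Rabs_R0; lra|].
  eapply Rle_trans; [apply Rabs_triang|]. rewrite Rabs_mult, (Rabs_pos_eq x) by lra.
  assert (x * Rabs (peval p x) <= 1 * Rabs (peval p x))
    by (apply Rmult_le_compat_r; [apply Rabs_pos|lra]).
  lra.
Qed.

Definition tau (t : R) : R := / (1 + exp t).

Lemma is_derive_tau t : is_derive tau t (tau t * (tau t - 1)).
Proof. unfold tau. pose proof (exp_pos t). auto_derive; [lra|]. field. lra. Qed.

Lemma tau_bounds t : 0 < tau t < 1 /\ tau t <= exp (- t).
Proof.
  unfold tau. pose proof (exp_pos t). rewrite exp_Ropp. repeat split.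
  - apply Rinv_0_lt_compat. lra.
  - rewrite <- Rinv_1. apply Rinv_lt_contravar; lra.
  - apply Rinv_le_contravar; lra.
Qed.

(* Since [tau' = tau (tau - 1)], the derivative of [tau p(tau)] is [tau ((X - 1) (X p)')(tau)]. *)
Definition pstep (p : list R) : list R :=
  let q := pderiv (0 :: p) in padd (0 :: q) (pscale (-1) q).

Definition profile (p : list R) (t : R) : R := tau t * peval p (tau t).

Lemma profile_padd p q t : profile (padd p q) t = profile p t + profile q t.
Proof. unfold profile. rewrite peval_padd. ring. Qed.

Lemma profile_pscale c p t : profile (pscale c p) t = c * profile p t.
Proof. unfold profile. rewrite peval_pscale. ring. Qed.

Lemma is_derive_profile p t : is_derive (profile p) t (profile (pstep p) t).
Proof.
  apply (is_derive_ext (fun t => peval (0 :: p) (tau t))); [intros; cbn; unfold profile; ring|].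
  eapply is_derive_eq.
  - apply (is_derive_comp (peval (0 :: p)) tau); [apply is_derive_peval|apply is_derive_tau].
  - unfold profile, pstep. rewrite peval_padd, peval_pscale. cbn. unfold scal, mult; cbn. ring.
Qed.

Lemma Rabs_profile_le p t : Rabs (profile p t) <= pnorm p * exp (- t).
Proof.
  destruct (tau_bounds t) as [Ht Hexp]. unfold profile.
  rewrite Rabs_mult, Rabs_pos_eq by lra.
  pose proof (Rabs_peval_le p (tau t) ltac:(lra)). pose proof (Rabs_pos (peval p (tau t))).
  pose proof (pnorm_nonneg p). nra.
Qed.

Record shape := Shape { log_pow : nat; inv_pow : nat; prof : list R }.

Definition shape_val (L : R) (sh : shape) (s a : R) : R :=
  L ^ log_pow sh / a ^ inv_pow sh * profile (prof sh) (s * L - ln a).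

Definition shape_step (e : dir) (sh : shape) : shape :=
  match e with
  | Ds => Shape (S (log_pow sh)) (inv_pow sh) (pstep (prof sh))
  | Da => Shape (log_pow sh) (S (inv_pow sh))
            (pscale (-1) (padd (pscale (INR (inv_pow sh)) (prof sh)) (pstep (prof sh))))
  end.

Lemma is_derive_shape_val L sh e s a : 0 < a ->
  is_derive (along e (shape_val L sh) s a) (coord e s a) (shape_val L (shape_step e sh) s a).
Proof.
  intros Ha. destruct sh as [i j p]. unfold shape_val.
  destruct e; cbn [along coord shape_step log_pow inv_pow prof pow].
  - auto_derive; [eexists; apply is_derive_profile|].
    rewrite (is_derive_unique _ _ _ (is_derive_profile p _)).
    replace (s * L + - ln a) with (s * L - ln a) by ring. field. apply pow_nonzero. lra.
  - auto_derive.
    { repeat split; auto; [apply pow_nonzero; lra|]. eexists; apply is_derive_profile. }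
    rewrite (is_derive_unique _ _ _ (is_derive_profile p _)), profile_pscale, profile_padd,
      profile_pscale.
    replace (s * L + - ln a) with (s * L - ln a) by ring.
    destruct j as [|j]; cbn [Init.Nat.pred pow INR]; field;
      [lra|split; [apply pow_nonzero|]; lra].
Qed.

Lemma pow_le_fact_mul_exp x n : 0 <= x -> x ^ n <= INR (fact n) * exp x.
Proof.
  intros Hx. pose proof (exp_ge_taylor x n Hx) as Htaylor. pose proof (INR_fact_lt_0 n).
  assert (Hlast : x ^ n / INR (fact n) <= sum_f_R0 (fun k => x ^ k / INR (fact k)) n).
  { destruct n as [|n]; cbn [sum_f_R0]; [lra|].
    assert (0 <= sum_f_R0 (fun k => x ^ k / INR (fact k)) n); [|lra].
    apply cond_pos_sum. intros k. pose proof (INR_fact_lt_0 k).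
    apply Rdiv_le_0_compat; [now apply pow_le|lra]. }
  apply Rmult_le_reg_r with (/ INR (fact n)); [now apply Rinv_0_lt_compat|].
  replace (INR (fact n) * exp x * / INR (fact n)) with (exp x) by (field; lra). lra.
Qed.

(* [L ^ i e^{-s L}] is bounded uniformly in [L >= 0] once [s >= s0 > 0]: this is what makes
   every derivative of [r_k] bounded uniformly in [k]. *)
Lemma pow_mul_exp_le L i s0 s : 0 <= L -> 0 < s0 -> s0 <= s ->
  L ^ i * exp (- (s * L)) <= INR (fact i) / s0 ^ i.
Proof.
  intros HL Hs0 Hs. pose proof (pow_lt s0 i Hs0). pose proof (exp_pos (s * L)).
  assert (Hexp : s0 ^ i * L ^ i <= INR (fact i) * exp (s * L)).
  { rewrite <- Rpow_mult_distr. eapply Rle_trans; [apply pow_le_fact_mul_exp; nra|].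
    apply Rmult_le_compat_l; [apply pos_INR|].
    destruct (Rle_lt_or_eq_dec (s0 * L) (s * L)) as [Hlt|Heq]; [nra| |].
    - left. now apply exp_increasing.
    - rewrite Heq. lra. }
  rewrite exp_Ropp. apply Rmult_le_reg_l with (s0 ^ i * exp (s * L)); [nra|].
  replace (s0 ^ i * exp (s * L) * (INR (fact i) / s0 ^ i)) with (INR (fact i) * exp (s * L))
    by (field; lra).
  replace (s0 ^ i * exp (s * L) * (L ^ i * / exp (s * L))) with (s0 ^ i * L ^ i) by (field; lra).
  exact Hexp.
Qed.

Definition shape_bound (s0 a0 a1 : R) (sh : shape) : R :=
  pnorm (prof sh) * a1 * INR (fact (log_pow sh)) / s0 ^ log_pow sh / a0 ^ inv_pow sh.

Lemma shape_bound_nonneg s0 a0 a1 sh : 0 < s0 -> 0 < a0 -> 0 < a1 ->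
  0 <= shape_bound s0 a0 a1 sh.
Proof.
  intros Hs0 Ha0 Ha1. destruct sh as [i j p]. unfold shape_bound. cbn [log_pow inv_pow prof].
  pose proof (pnorm_nonneg p). pose proof (pos_INR (fact i)).
  pose proof (pow_lt s0 i Hs0). pose proof (pow_lt a0 j Ha0).
  repeat apply Rdiv_le_0_compat; try lra. apply Rmult_le_pos; [|lra]. apply Rmult_le_pos; lra.
Qed.

Lemma Rabs_shape_val_le s0 a0 a1 L sh s a :
  0 < s0 -> 0 < a0 -> 0 <= L -> s0 <= s -> a0 <= a <= a1 ->
  Rabs (shape_val L sh s a) <= shape_bound s0 a0 a1 sh.
Proof.
  intros Hs0 Ha0 HL Hs Ha. destruct sh as [i j p]. unfold shape_val, shape_bound.
  cbn [log_pow inv_pow prof].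
  pose proof (pow_lt a0 j Ha0). pose proof (pow_lt a j ltac:(lra)). pose proof (pnorm_nonneg p).
  pose proof (pow_le L i HL). pose proof (exp_pos (- (s * L))).
  assert (Hprof : Rabs (profile p (s * L - ln a)) <= pnorm p * (a * exp (- (s * L)))).
  { replace (a * exp (- (s * L))) with (exp (- (s * L - ln a))); [apply Rabs_profile_le|].
    replace (- (s * L - ln a)) with (ln a + - (s * L)) by ring. rewrite exp_plus, exp_ln; lra. }
  assert (Hpow := pow_mul_exp_le L i s0 s HL Hs0 Hs).
  assert (Hinv : a / a ^ j <= a1 / a0 ^ j).
  { unfold Rdiv. apply Rmult_le_compat; try lra.
    - left. now apply Rinv_0_lt_compat.
    - apply Rinv_le_contravar; auto. apply pow_incr. lra. }
  rewrite Rabs_mult, (Rabs_pos_eq (L ^ i / a ^ j)) by (apply Rdiv_le_0_compat; lra).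
  apply Rle_trans with (pnorm p * (L ^ i * exp (- (s * L))) * (a / a ^ j)).
  - replace (pnorm p * (L ^ i * exp (- (s * L))) * (a / a ^ j))
      with (L ^ i / a ^ j * (pnorm p * (a * exp (- (s * L))))) by (field; lra).
    apply Rmult_le_compat_l; [apply Rdiv_le_0_compat|]; lra.
  - replace (pnorm p * a1 * INR (fact i) / s0 ^ i / a0 ^ j)
      with (pnorm p * (INR (fact i) / s0 ^ i) * (a1 / a0 ^ j))
      by (field; split; apply pow_nonzero; lra).
    apply Rmult_le_compat; [|apply Rdiv_le_0_compat; lra|apply Rmult_le_compat_l; lra|lra].
    apply Rmult_le_pos; [lra|]. apply Rmult_le_pos; lra.
Qed.

Definition shape_of (w : list dir) (p : list R) : shape := fold_right shape_step (Shape 0 0 p) w.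

(* For [k <> 0], [r_k = a / (a + |k|^{2s}) = tau (s L_k - ln a)] with [L_k = ln |k|^2 >= 0],
   so [mult_deriv k [1] []] is [r_k] and [mult_deriv k [0; 1] []] is [r_k ^ 2]; [w] lists the
   directions of differentiation, the last one first.  For [k = 0] both are the constant [1]. *)
Definition mult_deriv (k : list Z) (p : list R) (w : list dir) (s a : R) : R :=
  if Req_EM_T (normk2 k) 0 then match w with [] => 1 | _ => 0 end
  else shape_val (ln (normk2 k)) (shape_of w p) s a.

Lemma normk2_cases k : normk2 k = 0 \/ 1 <= normk2 k.
Proof.
  induction k as [|z k IH]; [now left|].
  change (normk2 (z :: k)) with (IZR z ^ 2 + normk2 k).
  assert (Hz : z = 0%Z \/ 1 <= IZR z ^ 2).
  { destruct (Z.eq_dec z 0) as [->|Hz]; [now left|right].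
    destruct (Z_lt_le_dec z 0) as [Hneg|Hpos].
    - assert (IZR z <= -1) by (apply IZR_le; lia). nra.
    - assert (1 <= IZR z) by (apply IZR_le; lia). nra. }
  destruct Hz as [->|Hz]; destruct IH; [left|right..]; cbn; lra.
Qed.

Lemma is_derive_mult_deriv k p w e s a : 0 < a ->
  is_derive (along e (mult_deriv k p w) s a) (coord e s a) (mult_deriv k p (e :: w) s a).
Proof.
  intros Ha. unfold mult_deriv. destruct (Req_EM_T (normk2 k) 0).
  - destruct e; apply (is_derive_const (match w with [] => 1 | _ => 0 end)).
  - now apply is_derive_shape_val.
Qed.

Lemma Rabs_mult_deriv_le s0 a0 a1 k p w s a : 0 < s0 -> 0 < a0 -> s0 <= s -> a0 <= a <= a1 ->
  Rabs (mult_deriv k p w s a) <= 1 + shape_bound s0 a0 a1 (shape_of w p).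
Proof.
  intros Hs0 Ha0 Hs Ha. pose proof (shape_bound_nonneg s0 a0 a1 (shape_of w p) Hs0 Ha0 ltac:(lra)).
  unfold mult_deriv. destruct (Req_EM_T (normk2 k) 0) as [|Hk].
  - destruct w; rewrite ?Rabs_R1, ?Rabs_R0; lra.
  - assert (0 <= ln (normk2 k)).
    { destruct (normk2_cases k) as [|H1]; [contradiction|]. rewrite <- ln_1. apply ln_le; lra. }
    pose proof (Rabs_shape_val_le s0 a0 a1 (ln (normk2 k)) (shape_of w p) s a). lra.
Qed.

Lemma mult_deriv_nil k s a : 0 < a ->
  mult_deriv k [1] [] s a = a / (a + kpow k s) /\
  mult_deriv k [0; 1] [] s a = (a / (a + kpow k s)) ^ 2.
Proof.
  intros Ha. unfold mult_deriv, kpow, shape_val, profile, tau. cbn.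
  destruct (Req_EM_T (normk2 k) 0); [split; field; lra|].
  unfold Rpower.
  replace (s * ln (normk2 k) - ln a) with (s * ln (normk2 k) + - ln a) by ring.
  rewrite exp_plus, exp_Ropp, exp_ln by lra. pose proof (exp_pos (s * ln (normk2 k))).
  split; field; lra.
Qed.

(** * The data-fit term *)

Definition cdot (z z' : C) : R := fst z * fst z' + snd z * snd z'.

Lemma Cmod_sqr z : Cmod z ^ 2 = fst z ^ 2 + snd z ^ 2.
Proof. unfold Cmod. apply pow2_sqrt. nra. Qed.

Lemma Rabs_cdot_le z z' : 2 * Rabs (cdot z z') <= Cmod z ^ 2 + Cmod z' ^ 2.
Proof.
  rewrite !Cmod_sqr. unfold cdot. destruct z as [x y], z' as [x' y']; cbn [fst snd].
  pose proof (pow2_ge_0 (x - x')). pose proof (pow2_ge_0 (y - y')).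
  pose proof (pow2_ge_0 (x + x')). pose proof (pow2_ge_0 (y + y')).
  cut (Rabs (x * x' + y * y') <= ((x ^ 2 + y ^ 2) + (x' ^ 2 + y' ^ 2)) / 2); [lra|].
  apply Rabs_le. split; nra.
Qed.

Definition fit_term (g u : list Z -> C) (k : list Z) (w : list dir) (s a : R) : R :=
  Cmod (g k) ^ 2 * mult_deriv k [0; 1] w s a - 2 * cdot (g k) (u k) * mult_deriv k [1] w s a
  + match w with [] => Cmod (u k) ^ 2 | _ => 0 end.

Lemma fit_term_nil g u k s a : 0 < a ->
  Cmod (Cminus (Ssol g s a k) (u k)) ^ 2 = fit_term g u k [] s a.
Proof.
  intros Ha. destruct (mult_deriv_nil k s a Ha) as [E1 E2]. unfold fit_term. rewrite E1, E2.
  unfold Ssol, cdot. rewrite !Cmod_sqr.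
  destruct (g k) as [x y], (u k) as [x' y']. cbn. ring.
Qed.

Lemma is_derive_fit_term g u k w e s a : 0 < a ->
  is_derive (along e (fit_term g u k w) s a) (coord e s a) (fit_term g u k (e :: w) s a).
Proof.
  intros Ha. unfold fit_term.
  pose proof (is_derive_mult_deriv k [0; 1] w e s a Ha) as H2.
  pose proof (is_derive_mult_deriv k [1] w e s a Ha) as H1.
  destruct e; cbn [along coord] in *;
    (eapply is_derive_eq; [apply (is_derive_lincomb _ _ _ _ _ _ _ _ H2 H1)|lra]).
Qed.

Definition fit_term_bound (s0 a0 a1 : R) (w : list dir) : R :=
  2 + shape_bound s0 a0 a1 (shape_of w [0; 1]) + shape_bound s0 a0 a1 (shape_of w [1]).

Lemma fit_term_bound_nonneg s0 a0 a1 w : 0 < s0 -> 0 < a0 -> 0 < a1 ->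
  0 <= fit_term_bound s0 a0 a1 w.
Proof.
  intros. unfold fit_term_bound.
  pose proof (shape_bound_nonneg s0 a0 a1 (shape_of w [0; 1])).
  pose proof (shape_bound_nonneg s0 a0 a1 (shape_of w [1])). lra.
Qed.

Lemma Rabs_fit_term_le s0 a0 a1 g u k w s a : 0 < s0 -> 0 < a0 -> s0 <= s -> a0 <= a <= a1 ->
  Rabs (fit_term g u k w s a) <= fit_term_bound s0 a0 a1 w * (Cmod (g k) ^ 2 + Cmod (u k) ^ 2).
Proof.
  intros Hs0 Ha0 Hs Ha. unfold fit_term, fit_term_bound.
  pose proof (Rabs_mult_deriv_le s0 a0 a1 k [0; 1] w s a Hs0 Ha0 Hs Ha) as H2.
  pose proof (Rabs_mult_deriv_le s0 a0 a1 k [1] w s a Hs0 Ha0 Hs Ha) as H1.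
  pose proof (shape_bound_nonneg s0 a0 a1 (shape_of w [0; 1]) Hs0 Ha0 ltac:(lra)).
  pose proof (shape_bound_nonneg s0 a0 a1 (shape_of w [1]) Hs0 Ha0 ltac:(lra)).
  pose proof (Rabs_cdot_le (g k) (u k)).
  pose proof (pow2_ge_0 (Cmod (g k))). pose proof (pow2_ge_0 (Cmod (u k))).
  set (G := Cmod (g k) ^ 2) in *. set (U := Cmod (u k) ^ 2) in *.
  set (c := cdot (g k) (u k)) in *.
  set (b2 := shape_bound s0 a0 a1 (shape_of w [0; 1])) in *.
  set (b1 := shape_bound s0 a0 a1 (shape_of w [1])) in *.
  assert (Hc : Rabs (match w with [] => U | _ => 0 end) <= U)
    by (destruct w; rewrite ?Rabs_R0, ?Rabs_pos_eq; lra).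
  eapply Rle_trans; [apply Rabs_triang|]. eapply Rle_trans; [apply Rplus_le_compat_r, Rabs_triang|].
  rewrite Rabs_Ropp, !Rabs_mult, (Rabs_pos_eq G), (Rabs_pos_eq 2) by lra.
  assert (G * Rabs (mult_deriv k [0; 1] w s a) <= G * (1 + b2))
    by (apply Rmult_le_compat_l; lra).
  assert (2 * Rabs c * Rabs (mult_deriv k [1] w s a) <= (G + U) * (1 + b1))
    by (apply Rmult_le_compat; try apply Rmult_le_pos; try apply Rabs_pos; lra).
  nra.
Qed.

Definition datafit (d : nat) (g u : list Z -> C) (w : list dir) (s a : R) : R :=
  ssum d (fun k => fit_term g u k w s a).

Definition weight (g u : list Z -> C) (k : list Z) : R := Cmod (g k) ^ 2 + Cmod (u k) ^ 2.

Lemma weight_nonneg g u k : 0 <= weight g u k.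
Proof.
  unfold weight. pose proof (pow2_ge_0 (Cmod (g k))). pose proof (pow2_ge_0 (Cmod (u k))). lra.
Qed.

Definition hessian_words : list (list dir) := [[Ds; Ds]; [Da; Ds]; [Ds; Da]; [Da; Da]].

Definition hessian_bound (s0 a0 a1 : R) : R :=
  lsum hessian_words (fit_term_bound s0 a0 a1).

Lemma fit_term_bound_le_hessian_bound s0 a0 a1 w : 0 < s0 -> 0 < a0 -> 0 < a1 ->
  In w hessian_words -> fit_term_bound s0 a0 a1 w <= hessian_bound s0 a0 a1.
Proof.
  intros Hs0 Ha0 Ha1 Hw. unfold hessian_bound, lsum.
  pose proof (fun w => fit_term_bound_nonneg s0 a0 a1 w Hs0 Ha0 Ha1) as Hnn.
  destruct Hw as [<-|[<-|[<-|[<-|[]]]]]; cbn;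
    pose proof (Hnn [Ds; Ds]); pose proof (Hnn [Da; Ds]); pose proof (Hnn [Ds; Da]);
    pose proof (Hnn [Da; Da]); lra.
Qed.

Lemma hessian_bound_pos s0 a0 a1 : 0 < s0 -> 0 < a0 -> 0 < a1 -> 0 < hessian_bound s0 a0 a1.
Proof.
  intros. eapply Rlt_le_trans; [|apply (fit_term_bound_le_hessian_bound _ _ _ [Ds; Ds]); cbn; auto].
  unfold fit_term_bound. pose proof (shape_bound_nonneg s0 a0 a1 (shape_of [Ds; Ds] [0; 1])).
  pose proof (shape_bound_nonneg s0 a0 a1 (shape_of [Ds; Ds] [1])). lra.
Qed.

Section DataFit.

Variables (d : nat) (s0 s1 a0 a1 : R) (g u : list Z -> C).
Hypotheses (Hs0 : 0 < s0) (Ha0 : 0 < a0) (Ha01 : a0 < a1).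
Hypotheses (Hg : l2summable d g) (Hu : l2summable d u).

Lemma weight_bounded : exists M, forall N, boxsum d N (weight g u) <= M.
Proof.
  destruct Hg as [Mg HMg], Hu as [Mu HMu]. exists (Mg + Mu). intros N.
  unfold weight. rewrite boxsum_plus. specialize (HMg N). specialize (HMu N). lra.
Qed.

Lemma Rabs_fit_term_le_weight k w s a : s0 <= s -> a0 <= a <= a1 -> forall B,
  fit_term_bound s0 a0 a1 w <= B -> Rabs (fit_term g u k w s a) <= B * weight g u k.
Proof.
  intros Hs Ha B HB. eapply Rle_trans; [apply (Rabs_fit_term_le s0 a0 a1); auto|].
  apply Rmult_le_compat_r; [apply weight_nonneg|exact HB].
Qed.

Lemma is_derive_datafit w e s a : inW s0 s1 a0 a1 s a ->
  is_derive (along e (datafit d g u w) s a) (coord e s a) (datafit d g u (e :: w) s a).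
Proof.
  intros [Hs Ha]. destruct weight_bounded as [M HM].
  pose proof (fit_term_bound_nonneg s0 a0 a1 w Hs0 Ha0 ltac:(lra)).
  pose proof (fit_term_bound_nonneg s0 a0 a1 (e :: w) Hs0 Ha0 ltac:(lra)).
  pose proof (fit_term_bound_nonneg s0 a0 a1 (e :: e :: w) Hs0 Ha0 ltac:(lra)).
  set (B := fit_term_bound s0 a0 a1 w + fit_term_bound s0 a0 a1 (e :: w)
            + fit_term_bound s0 a0 a1 (e :: e :: w)).
  destruct e; cbn [along coord].
  - apply (is_derive_ssum d (weight g u) M (weight_nonneg g u) HM s0 s1 B
             (fun k x => fit_term g u k w x a) (fun k x => fit_term g u k (Ds :: w) x a)
             (fun k x => fit_term g u k (Ds :: Ds :: w) x a)); [unfold B; lra|lra| | |].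
    + intros k y Hy. apply (is_derive_fit_term g u k w Ds y a). lra.
    + intros k y Hy. apply (is_derive_fit_term g u k (Ds :: w) Ds y a). lra.
    + intros k y Hy. repeat split; apply Rabs_fit_term_le_weight; unfold B; lra.
  - apply (is_derive_ssum d (weight g u) M (weight_nonneg g u) HM a0 a1 B
             (fun k y => fit_term g u k w s y) (fun k y => fit_term g u k (Da :: w) s y)
             (fun k y => fit_term g u k (Da :: Da :: w) s y)); [unfold B; lra|lra| | |].
    + intros k y Hy. apply (is_derive_fit_term g u k w Da s y). lra.
    + intros k y Hy. apply (is_derive_fit_term g u k (Da :: w) Da s y). lra.
    + intros k y Hy. repeat split; apply Rabs_fit_term_le_weight; unfold B; lra.
Qed.

Lemma Rabs_datafit_le w s a : inW s0 s1 a0 a1 s a ->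
  Rabs (datafit d g u w s a) <= fit_term_bound s0 a0 a1 w * ssum d (weight g u).
Proof.
  intros [Hs Ha]. destruct weight_bounded as [M HM].
  apply (Rabs_ssum_le d (weight g u) M (weight_nonneg g u) HM).
  - apply fit_term_bound_nonneg; lra.
  - intros k. apply Rabs_fit_term_le_weight; lra.
Qed.

Lemma Rabs_datafit_le_hessian_bound w s a : In w hessian_words -> inW s0 s1 a0 a1 s a ->
  Rabs (datafit d g u w s a) <= hessian_bound s0 a0 a1 * ssum d (weight g u).
Proof.
  intros Hw H. eapply Rle_trans; [now apply Rabs_datafit_le|].
  destruct weight_bounded as [M HM].
  apply Rmult_le_compat_r; [exact (ssum_nonneg d _ M (weight_nonneg g u) HM)|].
  apply fit_term_bound_le_hessian_bound; auto; lra.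
Qed.

End DataFit.

(** * Hessians on the open rectangle *)

Definition partial (e : dir) (f : R -> R -> R) : R -> R -> R :=
  match e with Ds => d1 f | Da => d2 f end.

Definition qform (h11 h12 h21 h22 v1 v2 : R) : R :=
  v1 * (h11 * v1 + h12 * v2) + v2 * (h21 * v1 + h22 * v2).

Lemma partial_eq f e s a l : is_derive (along e f s a) (coord e s a) l -> partial e f s a = l.
Proof. destruct e; apply is_derive_unique. Qed.

Lemma locally_interval lo hi x : lo < x < hi -> locally x (fun y => lo < y < hi).
Proof. intros Hx. exact (open_and _ _ (open_gt lo) (open_lt hi) x Hx). Qed.

Section Partials.

Variables s0 s1 a0 a1 : R.

Definition partials_on (D : list dir -> R -> R -> R) : Prop :=
  forall s a, inW s0 s1 a0 a1 s a -> forall e w, (length w <= 1)%nat ->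
    is_derive (along e (D w) s a) (coord e s a) (D (e :: w) s a).

Lemma is_derive_along_ext f f' e s a l :
  (forall s a, inW s0 s1 a0 a1 s a -> f s a = f' s a) -> inW s0 s1 a0 a1 s a ->
  is_derive (along e f' s a) (coord e s a) l -> is_derive (along e f s a) (coord e s a) l.
Proof.
  intros Hext [Hs Ha]. apply is_derive_ext_loc. destruct e; cbn [along coord].
  - eapply filter_imp; [|exact (locally_interval s0 s1 s Hs)].
    intros x Hx. symmetry. apply Hext. split; lra.
  - eapply filter_imp; [|exact (locally_interval a0 a1 a Ha)].
    intros y Hy. symmetry. apply Hext. split; lra.
Qed.

Lemma partials_on_hessian f D :
  (forall s a, inW s0 s1 a0 a1 s a -> f s a = D [] s a) -> partials_on D ->
  twice_diff_on s0 s1 a0 a1 f /\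
  forall s a, inW s0 s1 a0 a1 s a -> forall v1 v2,
    hess_form f s a v1 v2
    = qform (D [Ds; Ds] s a) (D [Da; Ds] s a) (D [Ds; Da] s a) (D [Da; Da] s a) v1 v2.
Proof.
  intros Hf HD.
  assert (Hd1 : forall e s a, inW s0 s1 a0 a1 s a ->
            is_derive (along e f s a) (coord e s a) (D [e] s a)).
  { intros e s a H. apply (is_derive_along_ext f (D [])); auto. }
  assert (Hd2 : forall e e' s a, inW s0 s1 a0 a1 s a ->
            is_derive (along e (partial e' f) s a) (coord e s a) (D [e; e'] s a)).
  { intros e e' s a H. apply (is_derive_along_ext _ (D [e'])); auto.
    intros s' a' H'. apply partial_eq, Hd1, H'. }
  split.
  - intros s a H. repeat split; eexists;
      [exact (Hd1 Ds s a H)|exact (Hd1 Da s a H)|exact (Hd2 Ds Ds s a H)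
      |exact (Hd2 Da Ds s a H)|exact (Hd2 Ds Da s a H)|exact (Hd2 Da Da s a H)].
  - intros s a H v1 v2.
    assert (E : forall e e', partial e (partial e' f) s a = D [e; e'] s a)
      by (intros; apply partial_eq, Hd2, H).
    unfold qform. now rewrite <- (E Ds Ds), <- (E Da Ds), <- (E Ds Da), <- (E Da Da).
Qed.

Lemma partials_on_iter phi : twice_diff_on s0 s1 a0 a1 phi ->
  partials_on (fun w => fold_right partial phi w).
Proof.
  intros Hphi s a H e w Hw.
  destruct (Hphi s a H) as (H1 & H2 & H11 & H12 & H21 & H22).
  destruct w as [|e' [|]]; cbn in Hw; try lia; cbn [fold_right].
  - destruct e; apply Derive_correct; assumption.
  - destruct e, e'; apply Derive_correct; assumption.
Qed.

Lemma partials_on_lincomb c D D' : partials_on D -> partials_on D' ->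
  partials_on (fun w s a => c * D w s a + D' w s a).
Proof.
  intros HD HD' s a H e w Hw.
  apply (is_derive_ext (fun y => c * along e (D w) s a y + along e (D' w) s a y));
    [destruct e; reflexivity|].
  apply (is_derive_plus (fun y => c * along e (D w) s a y) (along e (D' w) s a));
    [apply is_derive_scal|]; auto.
Qed.

End Partials.

Lemma qform_lower_bound h11 h12 h21 h22 m v1 v2 :
  Rabs h11 <= m -> Rabs h12 <= m -> Rabs h21 <= m -> Rabs h22 <= m ->
  - (2 * m) * (v1 ^ 2 + v2 ^ 2) <= qform h11 h12 h21 h22 v1 v2.
Proof.
  intros H11 H12 H21 H22. apply Rabs_le_between in H11, H12, H21, H22. unfold qform.
  pose proof (Rmult_le_pos (h11 + m) (v1 ^ 2) ltac:(lra) (pow2_ge_0 v1)).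
  pose proof (Rmult_le_pos (h22 + m) (v2 ^ 2) ltac:(lra) (pow2_ge_0 v2)).
  pose proof (Rmult_le_pos (m + h12) ((v1 + v2) ^ 2) ltac:(lra) (pow2_ge_0 (v1 + v2))).
  pose proof (Rmult_le_pos (m - h12) ((v1 - v2) ^ 2) ltac:(lra) (pow2_ge_0 (v1 - v2))).
  pose proof (Rmult_le_pos (m + h21) ((v1 + v2) ^ 2) ltac:(lra) (pow2_ge_0 (v1 + v2))).
  pose proof (Rmult_le_pos (m - h21) ((v1 - v2) ^ 2) ltac:(lra) (pow2_ge_0 (v1 - v2))).
  nra.
Qed.

Lemma hess_psd_shift_perturb f phi theta c m s a h11 h12 h21 h22 :
  (forall v1 v2,
     hess_form f s a v1 v2 = c * qform h11 h12 h21 h22 v1 v2 + hess_form phi s a v1 v2) ->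
  0 <= c -> 4 * c * m <= theta -> hess_psd_shift phi theta s a ->
  Rabs h11 <= m -> Rabs h12 <= m -> Rabs h21 <= m -> Rabs h22 <= m ->
  hess_psd_shift f (theta / 2) s a.
Proof.
  intros Hf Hc Hcm Hphi H11 H12 H21 H22 v1 v2. rewrite Hf.
  pose proof (Hphi v1 v2). pose proof (qform_lower_bound _ _ _ _ m v1 v2 H11 H12 H21 H22).
  assert (Hv : 0 <= v1 ^ 2 + v2 ^ 2) by (pose proof (pow2_ge_0 v1); pose proof (pow2_ge_0 v2); lra).
  pose proof (Rmult_le_pos c (qform h11 h12 h21 h22 v1 v2 + 2 * m * (v1 ^ 2 + v2 ^ 2)) Hc
                ltac:(lra)).
  pose proof (Rmult_le_pos (theta - 4 * c * m) (v1 ^ 2 + v2 ^ 2) ltac:(lra) Hv).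
  nra.
Qed.

Lemma partials_on_datafit d s0 s1 a0 a1 g u : 0 < s0 -> 0 < a0 -> a0 < a1 ->
  l2summable d g -> l2summable d u -> partials_on s0 s1 a0 a1 (datafit d g u).
Proof. intros Hs0 Ha0 Ha01 Hg Hu s a H e w _. now apply (is_derive_datafit d s0 s1 a0 a1). Qed.

Lemma jfun_eq d g u phi s a : 0 < a ->
  jfun d g u phi s a = / (2 * (2 * PI) ^ d) * datafit d g u [] s a + phi s a.
Proof.
  intros Ha. unfold jfun, l2sq, datafit, ssum. do 3 f_equal. apply Lim_seq_ext. intros N.
  unfold boxsum. f_equal. apply map_ext. intros k. now apply fit_term_nil.
Qed.

Lemma weight_ssum_small d g u eps : l2summable d g -> l2summable d u ->
  L2norm d g < sqrt eps -> L2norm d u < sqrt eps ->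
  / (2 * (2 * PI) ^ d) * ssum d (weight g u) < eps.
Proof.
  intros [Mg Hg] [Mu Hu] Hng Hnu. apply sqrt_lt_0_alt in Hng, Hnu.
  assert (HG := is_lim_ssum_nonneg d _ Mg (fun k => pow2_ge_0 (Cmod (g k))) Hg).
  assert (HU := is_lim_ssum_nonneg d _ Mu (fun k => pow2_ge_0 (Cmod (u k))) Hu).
  change (l2sq d g) with (ssum d (fun k => Cmod (g k) ^ 2)) in Hng.
  change (l2sq d u) with (ssum d (fun k => Cmod (u k) ^ 2)) in Hnu.
  set (G := ssum d (fun k => Cmod (g k) ^ 2)) in *.
  set (U := ssum d (fun k => Cmod (u k) ^ 2)) in *.
  assert (HW : is_lim_seq (fun N => boxsum d N (weight g u)) (G + U)).
  { eapply is_lim_seq_ext; [|exact (is_lim_seq_plus' _ _ _ _ HG HU)].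
    intros N. unfold weight. now rewrite boxsum_plus. }
  rewrite (ssum_eq_of_lim _ _ _ HW).
  assert (0 < (2 * PI) ^ d) by (apply pow_lt; pose proof PI_RGT_0; lra).
  replace (/ (2 * (2 * PI) ^ d) * (G + U)) with ((G / (2 * PI) ^ d + U / (2 * PI) ^ d) / 2)
    by (field; lra).
  lra.
Qed.

Lemma jfun_hessian d s0 s1 a0 a1 g u phi : 0 < s0 -> 0 < a0 -> a0 < a1 ->
  l2summable d g -> l2summable d u -> twice_diff_on s0 s1 a0 a1 phi ->
  twice_diff_on s0 s1 a0 a1 (jfun d g u phi) /\
  forall s a, inW s0 s1 a0 a1 s a -> forall v1 v2,
    hess_form (jfun d g u phi) s a v1 v2 =
    / (2 * (2 * PI) ^ d) * qform (datafit d g u [Ds; Ds] s a) (datafit d g u [Da; Ds] s a)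
                                 (datafit d g u [Ds; Da] s a) (datafit d g u [Da; Da] s a) v1 v2
    + hess_form phi s a v1 v2.
Proof.
  intros Hs0 Ha0 Ha01 Hg Hu Hphi.
  destruct (partials_on_hessian s0 s1 a0 a1 (jfun d g u phi)
    (fun w s a => / (2 * (2 * PI) ^ d) * datafit d g u w s a + fold_right partial phi w s a))
    as [Htd Hhess].
  - intros s a [_ Ha]. apply jfun_eq. lra.
  - apply partials_on_lincomb; [now apply partials_on_datafit|now apply partials_on_iter].
  - split; [exact Htd|]. intros s a H v1 v2. rewrite (Hhess s a H).
    unfold qform, hess_form. cbn [fold_right partial]. ring.
Qed.

Theorem lemma4 (d : nat) (s0 s1 a0 a1 theta : R) :
  (1 <= d)%nat -> 0 < s0 -> s0 < s1 -> 0 < a0 -> a0 < a1 -> 0 < theta ->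
  exists delta : R, 0 < delta /\
  forall (phi : R -> R -> R),
    C2_on s0 s1 a0 a1 phi ->
    (forall s a, inW s0 s1 a0 a1 s a -> 0 <= phi s a) ->
    convex_on s0 s1 a0 a1 phi ->
    blows_up_at_boundary s0 s1 a0 a1 phi ->
    (forall s a, inW s0 s1 a0 a1 s a -> hess_psd_shift phi theta s a) ->
  forall (g ud : list Z -> C),
    l2summable d g -> g (repeat 0%Z d) = RtoC 0 ->
    l2summable d ud ->
    L2norm d g < delta -> L2norm d ud < delta ->
    exists kappa : R, 0 < kappa /\
      twice_diff_on s0 s1 a0 a1 (jfun d g ud phi) /\
      forall s a, inW s0 s1 a0 a1 s a -> hess_psd_shift (jfun d g ud phi) kappa s a.
Proof.
  intros _ Hs0 Hs01 Ha0 Ha01 Htheta.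
  pose proof (hessian_bound_pos s0 a0 a1 Hs0 Ha0 ltac:(lra)) as HB.
  set (B := hessian_bound s0 a0 a1) in *.
  exists (sqrt (theta / (4 * B))). split; [apply sqrt_lt_R0, Rdiv_lt_0_compat; lra|].
  intros phi [Hphi _] _ _ _ Hstrong g u Hg _ Hu Hng Hnu.
  set (c := / (2 * (2 * PI) ^ d)).
  assert (Hc : 0 < c)
    by (apply Rinv_0_lt_compat, Rmult_lt_0_compat, pow_lt; pose proof PI_RGT_0; lra).
  assert (Hsmall : 4 * c * (B * ssum d (weight g u)) <= theta).
  { pose proof (weight_ssum_small d g u _ Hg Hu Hng Hnu) as Hsmall.
    apply Rmult_lt_compat_l with (r := 4 * B) in Hsmall; [|lra].
    replace (4 * B * (theta / (4 * B))) with theta in Hsmall by (field; lra).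
    fold c in Hsmall. lra. }
  destruct (jfun_hessian d s0 s1 a0 a1 g u phi) as [Htd Hhess]; auto.
  exists (theta / 2). split; [lra|]. split; [exact Htd|].
  intros s a H.
  apply (hess_psd_shift_perturb _ phi theta c (B * ssum d (weight g u)) s a _ _ _ _ (Hhess s a H));
    auto; try lra.
  all: apply (Rabs_datafit_le_hessian_bound d s0 s1); cbn; auto; lra.
Qed.
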